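(* Let $X\in\mathbb{R}^d$, $Y\in\mathbb{R}$, $H\in\mathbb{R}^q$, $I\in\mathbb{R}^m$ be generated by the linear structural causal model $$X := BX + AI + h(H,\epsilon^X),\qquad Y := X^\top\beta^* + g(H,\epsilon^Y),$$ where $B\in\mathbb{R}^{d\times d}$ with $\operatorname{Id}-B$ invertible, $A\in\mathbb{R}^{d\times m}$, $\beta^*\in\mathbb{R}^d$, $h,g$ are arbitrary measurable functions, $I,H,\epsilon^X,\epsilon^Y$ are jointly independent, and $\operatorname{Cov}[I]$ is invertible. Let $C:=A^\top(\operatorname{Id}-B)^{-\top}\in\mathbb{R}^{m\times d}$ and $\mathcal{B}:=\{\beta\in\mathbb{R}^d : \operatorname{Cov}(I,X)\beta=\operatorname{Cov}(I,Y)\}$. Then for every $j\in\{1,\dots,d\}$: $$\beta^*_j \text{ is identifiable by the moment condition } \operatorname{Cov}(I,Y-X^\top\beta)=0 \iff \operatorname{Null}(C)_j=\{0\},$$ where $\operatorname{Null}(C)_j=\{w_j : w\in\operatorname{Null}(C)\}$. Moreover, whenever $\operatorname{Null}(C)_j=\{0\}$, it holds that $\beta^*_j=\big(\operatorname{Cov}(I,X)^{\dagger}\operatorname{Cov}(I,Y)\big)_j$, where $(\cdot)^\dagger$ denotes the Moore–Penrose inverse.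
   Context: ''$\beta^*_j$ is identifiable by the moment condition'' means that every $\beta\in\mathcal{B}$ (the solution set of $\operatorname{Cov}(I,Y-X^\top\beta)=0$) satisfies $\beta_j=\beta^*_j$, i.e. $\{\beta_j:\beta\in\mathcal{B}\}=\{\beta^*_j\}$. All covariances involved are assumed to exist. $M^{-\top}$ denotes $(M^{-1})^\top$. *)

From HB Require Import structures.
From mathcomp Require Import all_boot all_order all_algebra.
From mathcomp Require Import all_classical all_reals all_analysis.
Set Implicit Arguments. Unset Strict Implicit. Unset Printing Implicit Defensive.
Import Order.TTheory GRing.Theory Num.Theory.
Local Open Scope classical_set_scope.
Local Open Scope ring_scope.

(* Column vector of the coordinates of an n-tuple (R^n is represented, as a
   measurable space, by n.-tuple R with the product sigma-algebra). *)
Definition tcol (R : Type) (n : nat) (v : n.-tuple R) : 'cV[R]_n :=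
  \col_(i < n) tnth v i.

(* Mutual (joint) independence of four random elements: the product rule
   for all measurable events (subfamilies are obtained with setT). *)
Definition jointly_independent4 {dT} {T : measurableType dT} {R : realType}
  (P : probability T R)
  {d1 d2 d3 d4} {T1 : measurableType d1} {T2 : measurableType d2}
  {T3 : measurableType d3} {T4 : measurableType d4}
  (Z1 : T -> T1) (Z2 : T -> T2) (Z3 : T -> T3) (Z4 : T -> T4) : Prop :=
  forall (A1 : set T1) (A2 : set T2) (A3 : set T3) (A4 : set T4),
    measurable A1 -> measurable A2 -> measurable A3 -> measurable A4 ->
    P (Z1 @^-1` A1 `&` Z2 @^-1` A2 `&` Z3 @^-1` A3 `&` Z4 @^-1` A4) =
    (P (Z1 @^-1` A1) * P (Z2 @^-1` A2) * P (Z3 @^-1` A3) * P (Z4 @^-1` A4))%E.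

(* Real-valued covariance (the library's covariance is extended-real valued;
   it is finite under the square-integrability assumptions used below). *)
Definition rcov {dT} {T : measurableType dT} {R : realType}
  (P : probability T R) (U V : T -> R) : R := fine (covariance P U V).

(* Moore-Penrose inverse, characterised by the four Penrose conditions
   (over the reals the conjugate transpose is the transpose). *)
Definition is_moore_penrose {R : ringType} {m n : nat}
  (M : 'M[R]_(m, n)) (Mp : 'M[R]_(n, m)) : Prop :=
  [/\ M *m Mp *m M = M, Mp *m M *m Mp = Mp,
      (M *m Mp)^T = M *m Mp & (Mp *m M)^T = Mp *m M].

Definition null_proj {R : ringType} {m d : nat} (C : 'M[R]_(m, d)) (j : 'I_d)
  : set R := [set w j 0 | w in [set w : 'cV[R]_d | C *m w = 0]].

Definition identifiable_by_moment {dT} {T : measurableType dT} {R : realType}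
  (P : probability T R) {m d : nat}
  (Icomp : 'I_m -> T -> R) (X : T -> 'cV[R]_d) (Y : T -> R)
  (betastar : 'cV[R]_d) (j : 'I_d) : Prop :=
  [set beta j 0 | beta in
     [set beta : 'cV[R]_d | forall i : 'I_m,
        covariance P (Icomp i) (fun t => Y t - ((X t)^T *m beta) 0 0) = 0%E]]
  = [set betastar j 0].

From HB Require Import structures.
From mathcomp Require Import all_boot all_order all_algebra.
From mathcomp Require Import all_classical all_reals all_analysis.
From mathcomp Require Import measurable_realfun.
Import Order.TTheory GRing.Theory Num.Theory.
Local Open Scope classical_set_scope.
Local Open Scope ring_scope.

(* The noises are affine in the observed variables,
   h(H, eps^X) = (Id - B) X - A I and g(H, eps^Y) = Y - X^T beta*, and I is
   independent of both (H, eps^X) and (H, eps^Y), so they are uncorrelated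
   with I.  Hence Cov(I, X) (Id - B)^T = Cov[I] A^T, i.e. Cov(I, X) = Cov[I] C,
   and Cov(I, Y) = Cov(I, X) beta*.  Since Cov[I] is invertible, the solution
   set of the moment condition is beta* + Null(C), whose j-th coordinates form
   beta*_j + Null(C)_j.  Finally, for any generalized inverse M^+ of
   M = Cov(I, X), the vector M^+ M beta* is again a solution, so its j-th
   coordinate is beta*_j as soon as Null(C)_j = {0}. *)

Section independent_pair.
Local Open Scope ereal_scope.
Context {dT} {T : measurableType dT} {R : realType} (P : probability T R)
  {d1 d2} {T1 : measurableType d1} {T2 : measurableType d2}.
Variables (Z1 : {mfun T >-> T1}) (Z2 : {mfun T >-> T2}).
Hypothesis indep12 : forall A1 A2, measurable A1 -> measurable A2 ->
  P (Z1 @^-1` A1 `&` Z2 @^-1` A2) = P (Z1 @^-1` A1) * P (Z2 @^-1` A2).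

Definition rv_pair t := (Z1 t, Z2 t).

Let measurable_rv_pair : measurable_fun setT rv_pair.
Proof. exact: measurable_fun_pair. Qed.

HB.instance Definition _ :=
  isMeasurableFun.Build _ _ _ _ rv_pair measurable_rv_pair.

Lemma distribution_pair_indep S : measurable S ->
  (distribution P Z1 \x distribution P Z2) S = distribution P rv_pair S.
Proof. exact: product_measure_unique. Qed.

Let Pfin : P setT \is a fin_num := fin_num_measure P _ measurableT.

Let distribution_integrable {d'} {T' : measurableType d'}
    {Z : {mfun T >-> T'}} {w : T' -> R} :
    measurable_fun setT w -> w \o Z \in Lfun P 2%:E ->
  (distribution P Z).-integrable setT (EFin \o w).
Proof.
move=> mw w2; apply: integrable_pushforward => //; first exact/measurable_EFinP.
by rewrite preimage_setT; exact/Lfun1_integrable/Lfun_subset12.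
Qed.

Let integral_distribution_EFin {d'} {T' : measurableType d'}
    {Z : {mfun T >-> T'}} {w : T' -> R} :
    measurable_fun setT w -> w \o Z \in Lfun P 2%:E ->
  \int[distribution P Z]_y (w y)%:E = \int[P]_x (w (Z x))%:E.
Proof.
move=> mw w2; rewrite integral_distribution //; first exact/measurable_EFinP.
exact/Lfun1_integrable/Lfun_subset12.
Qed.

Variables (u : T1 -> R) (v : T2 -> R).
Hypotheses (mu : measurable_fun setT u) (mv : measurable_fun setT v).
Hypotheses (u2 : u \o Z1 \in Lfun P 2%:E) (v2 : v \o Z2 \in Lfun P 2%:E).

Let uv (z : T1 * T2) := (u z.1 * v z.2)%:E.

Let measurable_uv : measurable_fun setT uv.
Proof.
by apply/measurable_EFinP/measurable_funM; apply: measurableT_comp.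
Qed.

Lemma expectationM_indep :
  'E_P[(u \o Z1) * (v \o Z2)] = 'E_P[u \o Z1] * 'E_P[v \o Z2].
Proof.
have uvJ : (distribution P rv_pair).-integrable setT uv.
  apply: integrable_pushforward => //; rewrite preimage_setT.
  exact/Lfun1_integrable/Lfun2_mul_Lfun1.
have joint_law : forall S, measurable S -> S `<=` setT ->
    (distribution P Z1 \x distribution P Z2) S = distribution P rv_pair S.
  by move=> S mS _; exact: distribution_pair_indep.
have uv12 : (distribution P Z1 \x distribution P Z2).-integrable setT uv.
  move/integrableP : uvJ => [_ uvJ]; apply/integrableP; split => //.
  by rewrite (eq_measure_integral _ joint_law).
have vfin := integrable_fin_num measurableT (distribution_integrable mv v2).
rewrite unlock.
transitivity (\int[distribution P Z1 \x distribution P Z2]_z uv z).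
  rewrite (eq_measure_integral _ joint_law) integral_distribution //.
  exact/Lfun1_integrable/Lfun2_mul_Lfun1.
rewrite -(integral12_prod_meas1 uv12) /fubini_F.
transitivity (\int[distribution P Z1]_x
    ((u x)%:E * \int[distribution P Z2]_y (v y)%:E)).
  apply: eq_integral => x _; rewrite /uv /=.
  under eq_integral do rewrite EFinM.
  by rewrite integralZl //; exact: distribution_integrable.
rewrite -(fineK vfin) integralZr ?distribution_integrable // fineK //.
by rewrite !integral_distribution_EFin.
Qed.

Lemma covariance_indep : covariance P (u \o Z1) (v \o Z2) = 0.
Proof.
have u1 := Lfun_subset12 Pfin u2; have v1 := Lfun_subset12 Pfin v2.
rewrite covarianceE ?Lfun2_mul_Lfun1 // expectationM_indep subee //.
by rewrite fin_numM // expectation_fin_num.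
Qed.

End independent_pair.
Arguments covariance_indep {dT T R P d1 d2 T1 T2 Z1 Z2} indep12 {u v}.

Section law_on.
Local Open Scope ereal_scope.
Context {dT} {T : measurableType dT} {R : realType} (P : probability T R)
  {d'} {T' : measurableType d'} (W : {mfun T >-> T'}) (E : set T).
Hypothesis mE : measurable E.

Definition law_on (S : set T') := P (E `&` W @^-1` S).

Let law_on0 : law_on set0 = 0.
Proof. by rewrite /law_on preimage_set0 setI0 measure0. Qed.

Let law_on_ge0 S : 0 <= law_on S.
Proof. exact: measure_ge0. Qed.

Let law_on_sigma_additive : semi_sigma_additive law_on.
Proof.
move=> F mF tF mUF; rewrite /law_on preimage_bigcup setI_bigcupr.
apply: measure_semi_sigma_additive.
- by move=> n; apply: measurableI => //; exact: measurable_funPTI.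
- apply/trivIsetP => i j _ _ ij; rewrite setIACA setIid -preimage_setI.
  by move/trivIsetP : tF => /(_ _ _ _ _ ij) ->//; rewrite preimage_set0 setI0.
- by rewrite -setI_bigcupr -preimage_bigcup; apply: measurableI => //;
    exact: measurable_funPTI.
Qed.

HB.instance Definition _ := isMeasure.Build _ _ _
  law_on law_on0 law_on_ge0 law_on_sigma_additive.

End law_on.

Section independent_triple.
Local Open Scope ereal_scope.
Context {dT} {T : measurableType dT} {R : realType} (P : probability T R)
  {d1 d2 d3} {T1 : measurableType d1} {T2 : measurableType d2}
  {T3 : measurableType d3}.
Variables (Z1 : {mfun T >-> T1}) (Z2 : {mfun T >-> T2}) (Z3 : {mfun T >-> T3}).
Hypothesis indep123 : forall A1 A2 A3,
  measurable A1 -> measurable A2 -> measurable A3 ->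
  P (Z1 @^-1` A1 `&` Z2 @^-1` A2 `&` Z3 @^-1` A3) =
  P (Z1 @^-1` A1) * P (Z2 @^-1` A2) * P (Z3 @^-1` A3).

(* Both sides are finite measures in [S] that agree on the measurable
   rectangles, a pi-system generating the product sigma-algebra. *)
Lemma indep_rv_pair A1 S : measurable A1 -> measurable S ->
  P (Z1 @^-1` A1 `&` rv_pair Z2 Z3 @^-1` S) =
  P (Z1 @^-1` A1) * P (rv_pair Z2 Z3 @^-1` S).
Proof.
move=> mA1 mS; have mE : measurable (Z1 @^-1` A1) by exact: measurable_funPTI.
have PEfin : P (Z1 @^-1` A1) \is a fin_num by exact: fin_num_measure.
have c0 : (0 <= fine (P (Z1 @^-1` A1)))%R by rewrite fine_ge0 ?measure_ge0.
have cE : (NngNum c0)%:num%:E = P (Z1 @^-1` A1) := fineK PEfin.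
pose rect := [set A2 `*` A3 | A2 in @measurable _ T2 & A3 in @measurable _ T3].
suff : law_on P (rv_pair Z2 Z3) (Z1 @^-1` A1) S =
    mscale (NngNum c0) (distribution P (rv_pair Z2 Z3)) S.
  by rewrite /law_on /mscale cE.
apply: (measure_unique rect (fun=> setT)) => //.
- exact: measurable_prod_measurableType.
- move=> _ _ [A2 mA2 [A3 mA3 <-]] [B2 mB2 [B3 mB3 <-]].
  rewrite -setXI; exists (A2 `&` B2); first exact: measurableI.
  by exists (A3 `&` B3); first exact: measurableI.
- by move=> _; exists setT => //; exists setT => //; rewrite setXTT.
- by rewrite bigcup_const //; exists 0%N.
- move=> _ [A2 mA2 [A3 mA3 <-]].
  rewrite /= /law_on /mscale cE /distribution /pushforward.
  have -> : rv_pair Z2 Z3 @^-1` (A2 `*` A3) = Z2 @^-1` A2 `&` Z3 @^-1` A3 by [].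
  rewrite setIA indep123 // -muleA; congr (_ * _).
  have := indep123 _ _ _ measurableT mA2 mA3.
  by rewrite preimage_setT setTI probability_setT mul1e.
- move=> _; apply: (le_lt_trans (probability_le1 _ _)); last exact: ltey.
  by apply: measurableI => //; exact: measurable_funPTI.
Qed.

End independent_triple.
Arguments indep_rv_pair {dT T R P d1 d2 d3 T1 T2 T3 Z1 Z2 Z3} indep123.

Section jointly_independent4_sub.
Local Open Scope ereal_scope.
Context {dT} {T : measurableType dT} {R : realType} {P : probability T R}
  {d1 d2 d3 d4} {T1 : measurableType d1} {T2 : measurableType d2}
  {T3 : measurableType d3} {T4 : measurableType d4}.
Context {Z1 : T -> T1} {Z2 : T -> T2} {Z3 : T -> T3} {Z4 : T -> T4}.

Lemma jointly_independent4_drop4 : jointly_independent4 P Z1 Z2 Z3 Z4 ->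
  forall A1 A2 A3, measurable A1 -> measurable A2 -> measurable A3 ->
  P (Z1 @^-1` A1 `&` Z2 @^-1` A2 `&` Z3 @^-1` A3) =
  P (Z1 @^-1` A1) * P (Z2 @^-1` A2) * P (Z3 @^-1` A3).
Proof.
move=> indep A1 A2 A3 mA1 mA2 mA3.
have := indep A1 A2 A3 setT mA1 mA2 mA3 measurableT.
by rewrite !preimage_setT setIT probability_setT mule1.
Qed.

Lemma jointly_independent4_drop3 : jointly_independent4 P Z1 Z2 Z3 Z4 ->
  forall A1 A2 A4, measurable A1 -> measurable A2 -> measurable A4 ->
  P (Z1 @^-1` A1 `&` Z2 @^-1` A2 `&` Z4 @^-1` A4) =
  P (Z1 @^-1` A1) * P (Z2 @^-1` A2) * P (Z4 @^-1` A4).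
Proof.
move=> indep A1 A2 A4 mA1 mA2 mA4.
have := indep A1 A2 setT A4 mA1 mA2 measurableT mA4.
by rewrite !preimage_setT setIT probability_setT mule1.
Qed.

End jointly_independent4_sub.

Section independent_triple_covariance.
Local Open Scope ereal_scope.
Context {dT} {T : measurableType dT} {R : realType} (P : probability T R)
  {d1 d2 d3} {T1 : measurableType d1} {T2 : measurableType d2}
  {T3 : measurableType d3}.
Variables (Z1 : T -> T1) (Z2 : T -> T2) (Z3 : T -> T3).

Lemma covariance_indep3 (u : T1 -> R) (v : T2 * T3 -> R) :
  measurable_fun setT Z1 -> measurable_fun setT Z2 -> measurable_fun setT Z3 ->
  measurable_fun setT u -> measurable_fun setT v ->
  (forall A1 A2 A3, measurable A1 -> measurable A2 -> measurable A3 ->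
    P (Z1 @^-1` A1 `&` Z2 @^-1` A2 `&` Z3 @^-1` A3) =
    P (Z1 @^-1` A1) * P (Z2 @^-1` A2) * P (Z3 @^-1` A3)) ->
  (fun t => u (Z1 t)) \in Lfun P 2%:E ->
  (fun t => v (Z2 t, Z3 t)) \in Lfun P 2%:E ->
  covariance P (fun t => u (Z1 t)) (fun t => v (Z2 t, Z3 t)) = 0.
Proof.
move=> mZ1 mZ2 mZ3 mu mv indep123 u2 v2.
pose Z1m : {mfun T >-> T1} :=
  HB.pack Z1 (isMeasurableFun.Build _ _ _ _ Z1 mZ1).
pose Z2m : {mfun T >-> T2} :=
  HB.pack Z2 (isMeasurableFun.Build _ _ _ _ Z2 mZ2).
pose Z3m : {mfun T >-> T3} :=
  HB.pack Z3 (isMeasurableFun.Build _ _ _ _ Z3 mZ3).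
have indep := indep_rv_pair (Z1 := Z1m) (Z2 := Z2m) (Z3 := Z3m) indep123.
exact: (covariance_indep indep mu mv u2 v2).
Qed.

End independent_triple_covariance.

Section covariance_matrix.
Context {dT} {T : measurableType dT} {R : realType} (P : probability T R).

Definition Lfun2_family {n} (V : 'I_n -> T -> R) :=
  forall k, V k \in Lfun P 2%:E.

Definition coords {n} (Z : T -> 'cV[R]_n) : 'I_n -> T -> R :=
  fun k t => Z t k 0.

Definition covmx {m n} (U : 'I_m -> T -> R) (V : 'I_n -> T -> R)
    : 'M[R]_(m, n) :=
  \matrix_(i, j) rcov P (U i) (V j).

Lemma coords_scalar_mx (f : T -> R) :
  coords (fun t => (f t)%:M) = fun _ : 'I_1 => f.
Proof.
by apply/funext => k; apply/funext => t; rewrite /coords (ord1 k) mxE mulr1n.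
Qed.

Lemma coords_tcol {m} (I : T -> m.-tuple R) :
  coords (fun t => tcol (I t)) = fun i t => tnth (I t) i.
Proof. by apply/funext => i; apply/funext => t; rewrite /coords mxE. Qed.

Let Pfin : P setT \is a fin_num := fin_num_measure P _ measurableT.

Let two_ge1 : (1 <= (2%:E : \bar R))%E.
Proof. by rewrite lee_fin ler1n. Qed.

Lemma rcovE (U V : T -> R) : U \in Lfun P 2%:E -> V \in Lfun P 2%:E ->
  covariance P U V = (rcov P U V)%:E.
Proof.
move=> U2 V2; rewrite /rcov fineK //.
by apply: covariance_fin_num;
  [exact: Lfun_subset12 | exact: Lfun_subset12 | exact: Lfun2_mul_Lfun1].
Qed.

Lemma Lfun2_lincomb (I : Type) (s : seq I) (a : I -> R) (V : I -> T -> R) :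
  (forall k, V k \in Lfun P 2%:E) ->
  (fun t => \sum_(k <- s) a k * V k t) \in Lfun P 2%:E.
Proof.
move=> V2.
have -> : (fun t => \sum_(k <- s) a k * V k t) = \sum_(k <- s) a k *: V k.
  by apply/funext => t; rewrite fct_sumE.
by apply: rpred_sum => k _; exact: rpredZ.
Qed.

Lemma rcovDr (U V W : T -> R) :
  U \in Lfun P 2%:E -> V \in Lfun P 2%:E -> W \in Lfun P 2%:E ->
  rcov P U (V \+ W) = rcov P U V + rcov P U W.
Proof.
by move=> U2 V2 W2; rewrite /rcov covarianceDr // !rcovE // -EFinD.
Qed.

Lemma rcovZr a (U V : T -> R) : U \in Lfun P 2%:E -> V \in Lfun P 2%:E ->
  rcov P U (a \o* V) = a * rcov P U V.
Proof.
move=> U2 V2; have U1 := Lfun_subset12 Pfin U2.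
have V1 := Lfun_subset12 Pfin V2.
by rewrite /rcov covarianceZr ?Lfun2_mul_Lfun1 // rcovE.
Qed.

Lemma rcov_lincomb (I : Type) (s : seq I) (U : T -> R) (a : I -> R)
    (V : I -> T -> R) :
  U \in Lfun P 2%:E -> (forall k, V k \in Lfun P 2%:E) ->
  rcov P U (fun t => \sum_(k <- s) a k * V k t) =
  \sum_(k <- s) a k * rcov P U (V k).
Proof.
move=> U2 V2; elim: s => [|k s IH].
  rewrite big_nil -[RHS]/(fine 0%E) -(covariance_cst_r P U 0).
  by congr (rcov P U _); apply/funext => t; rewrite big_nil.
rewrite big_cons -IH -rcovZr // -rcovDr ?Lfun2_lincomb //.
  by congr (rcov P U _); apply/funext => t; rewrite big_cons /= mulrC.
exact: Lfun_scale.
Qed.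

Lemma Lfun2_coords_mulmx {n k} (M : 'M[R]_(k, n)) (Z : T -> 'cV[R]_n) :
  Lfun2_family (coords Z) -> Lfun2_family (coords (fun t => M *m Z t)).
Proof.
move=> Z2 i; have -> : coords (fun t => M *m Z t) i =
    (fun t => \sum_j M i j * Z t j 0) by apply/funext => t; rewrite /coords mxE.
exact: Lfun2_lincomb.
Qed.

Lemma Lfun2_coordsD {n} (Z1 Z2 : T -> 'cV[R]_n) :
  Lfun2_family (coords Z1) -> Lfun2_family (coords Z2) ->
  Lfun2_family (coords (fun t => Z1 t + Z2 t)).
Proof.
move=> Z12 Z22 k; have -> : coords (fun t => Z1 t + Z2 t) k =
    coords Z1 k \+ coords Z2 k by apply/funext => t; rewrite /coords mxE.
exact: rpredD.
Qed.

Lemma covmx_mulmxr {m n k} (U : 'I_m -> T -> R) (M : 'M[R]_(k, n))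
    (Z : T -> 'cV[R]_n) : Lfun2_family U -> Lfun2_family (coords Z) ->
  covmx U (coords (fun t => M *m Z t)) = covmx U (coords Z) *m M^T.
Proof.
move=> U2 Z2; apply/matrixP => i j; rewrite !mxE.
have -> : coords (fun t => M *m Z t) j = (fun t => \sum_l M j l * Z t l 0).
  by apply/funext => t; rewrite /coords mxE.
by rewrite rcov_lincomb //; apply: eq_bigr => l _; rewrite !mxE mulrC.
Qed.

Lemma covmx_addr {m n} (U : 'I_m -> T -> R) (Z1 Z2 : T -> 'cV[R]_n) :
  Lfun2_family U -> Lfun2_family (coords Z1) -> Lfun2_family (coords Z2) ->
  covmx U (coords (fun t => Z1 t + Z2 t)) =
  covmx U (coords Z1) + covmx U (coords Z2).
Proof.
move=> U2 Z12 Z22; apply/matrixP => i j; rewrite !mxE -rcovDr //.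
by congr (rcov P _ _); apply/funext => t; rewrite /coords mxE.
Qed.

End covariance_matrix.

Lemma covmx_indep3 {dT} {T : measurableType dT} {R : realType}
    (P : probability T R) {d1 d2 d3} {T1 : measurableType d1}
    {T2 : measurableType d2} {T3 : measurableType d3}
    (Z1 : T -> T1) (Z2 : T -> T2) (Z3 : T -> T3) {m n}
    (U : 'I_m -> T1 -> R) (V : 'I_n -> T2 * T3 -> R) :
  measurable_fun setT Z1 -> measurable_fun setT Z2 -> measurable_fun setT Z3 ->
  (forall i, measurable_fun setT (U i)) ->
  (forall k, measurable_fun setT (V k)) ->
  (forall A1 A2 A3, measurable A1 -> measurable A2 -> measurable A3 ->
    P (Z1 @^-1` A1 `&` Z2 @^-1` A2 `&` Z3 @^-1` A3) =
    (P (Z1 @^-1` A1) * P (Z2 @^-1` A2) * P (Z3 @^-1` A3))%E) ->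
  Lfun2_family P (fun i t => U i (Z1 t)) ->
  Lfun2_family P (fun k t => V k (Z2 t, Z3 t)) ->
  covmx P (fun i t => U i (Z1 t)) (fun k t => V k (Z2 t, Z3 t)) = 0.
Proof.
move=> mZ1 mZ2 mZ3 mU mV indep123 U2 V2; apply/matrixP => i k.
by rewrite !mxE /rcov (covariance_indep3 P Z1 Z2 Z3 (U i) (V k)).
Qed.

Section instrumental_moments.
Context {dT} {T : measurableType dT} {R : realType} (P : probability T R)
  {m d : nat}.
Variables (Ii : 'I_m -> T -> R) (Iv : T -> 'cV[R]_m).
Variables (X : T -> 'cV[R]_d) (Y : T -> R) (hX : T -> 'cV[R]_d) (gY : T -> R).
Variables (B : 'M[R]_d) (A : 'M[R]_(d, m)) (betastar : 'cV[R]_d).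
Hypotheses (Ii2 : Lfun2_family P Ii) (X2 : Lfun2_family P (coords X))
  (Y2 : Y \in Lfun P 2%:E).
Hypothesis Iv_coords : coords Iv = Ii.
Hypothesis X_eq : forall t, X t = B *m X t + A *m Iv t + hX t.
Hypothesis Y_eq : forall t, Y t = ((X t)^T *m betastar) 0 0 + gY t.

Let Lfun2_Y : Lfun2_family P (coords (fun t => (Y t)%:M)).
Proof. by rewrite coords_scalar_mx. Qed.

Let residual (beta : 'cV[R]_d) t := (Y t)%:M + (- beta^T) *m X t.

Let residual_coord beta t :
  coords (residual beta) 0 t = Y t - ((X t)^T *m beta) 0 0.
Proof.
rewrite /coords /residual mulNmx !mxE eqxx mulr1n; congr (_ - _).
by apply: eq_bigr => k _; rewrite !mxE mulrC.
Qed.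

Let Lfun2_residual beta : Lfun2_family P (coords (residual beta)).
Proof. exact/Lfun2_coordsD/Lfun2_coords_mulmx. Qed.

Let covmx_residual beta : covmx P Ii (coords (residual beta)) =
  covmx P Ii (fun _ : 'I_1 => Y) - covmx P Ii (coords X) *m beta.
Proof.
rewrite /residual covmx_addr ?covmx_mulmxr //; last exact: Lfun2_coords_mulmx.
by rewrite (coords_scalar_mx Y) linearN /= trmxK mulmxN.
Qed.

Lemma moment_conditionE beta i :
  covariance P (Ii i) (fun t => Y t - ((X t)^T *m beta) 0 0) =
  ((covmx P Ii (fun _ : 'I_1 => Y) - covmx P Ii (coords X) *m beta) i 0)%:E.
Proof.
rewrite -covmx_residual [in RHS]mxE -rcovE //; last exact: Lfun2_residual.
by congr (covariance P _ _); apply/funext => t; rewrite residual_coord.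
Qed.

Lemma moment_condition_iff beta :
  (forall i,
    covariance P (Ii i) (fun t => Y t - ((X t)^T *m beta) 0 0) = 0) <->
  covmx P Ii (coords X) *m beta = covmx P Ii (fun _ : 'I_1 => Y).
Proof.
split => [cov0 | CXb i]; last by rewrite moment_conditionE CXb subrr mxE.
apply/esym/subr0_eq/matrixP => i k; rewrite (ord1 k) [RHS]mxE.
by have := cov0 i; rewrite moment_conditionE => -[].
Qed.

Lemma noise_X_eq t : hX t = (1%:M - B) *m X t + (- A) *m Iv t.
Proof.
apply/esym/eqP; rewrite mulmxBl mul1mx mulNmx -addrA -opprD subr_eq addrC.
by rewrite -X_eq.
Qed.

Let Lfun2_Iv : Lfun2_family P (coords Iv).
Proof. by rewrite Iv_coords. Qed.

Lemma Lfun2_noise_X : Lfun2_family P (coords hX).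
Proof.
by rewrite (funext noise_X_eq); apply: Lfun2_coordsD; exact: Lfun2_coords_mulmx.
Qed.

Let noise_Y_coords : (fun _ : 'I_1 => gY) = coords (residual betastar).
Proof.
apply/funext => k; apply/funext => t; rewrite (ord1 k) residual_coord Y_eq.
by rewrite addrAC subrr add0r.
Qed.

Lemma Lfun2_noise_Y : gY \in Lfun P 2%:E.
Proof. by have := Lfun2_residual betastar ord0; rewrite -noise_Y_coords. Qed.

Hypotheses (hX_uncorrelated : covmx P Ii (coords hX) = 0)
  (gY_uncorrelated : covmx P Ii (fun _ : 'I_1 => gY) = 0).

Lemma covmx_IX : 1%:M - B \in unitmx ->
  covmx P Ii (coords X) = covmx P Ii Ii *m (A^T *m (invmx (1%:M - B))^T).
Proof.
move=> unitB; have : covmx P Ii (coords X) *m (1%:M - B)^T =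
    covmx P Ii Ii *m A^T.
  apply: subr0_eq; rewrite -[RHS]hX_uncorrelated (funext noise_X_eq).
  rewrite covmx_addr ?covmx_mulmxr //; [|exact: Lfun2_coords_mulmx..].
  by rewrite Iv_coords linearN /= mulmxN.
move/(congr1 (mulmx^~ (invmx (1%:M - B)^T))); rewrite mulmxK ?unitmx_tr //.
by rewrite trmx_inv mulmxA.
Qed.

Lemma covmx_IY :
  covmx P Ii (fun _ : 'I_1 => Y) = covmx P Ii (coords X) *m betastar.
Proof.
by apply: subr0_eq; rewrite -covmx_residual -noise_Y_coords.
Qed.

End instrumental_moments.

Lemma null_proj_mulmx_unit {R : comUnitRingType} {m d : nat}
    (S : 'M[R]_m) (C : 'M[R]_(m, d)) j :
  S \in unitmx -> null_proj (S *m C) j = null_proj C j.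
Proof.
move=> unitS; rewrite /null_proj.
suff -> : [set w : 'cV[R]_d | S *m C *m w = 0] = [set w | C *m w = 0] by [].
apply/seteqP; split => w /=; last by rewrite -mulmxA => ->; rewrite mulmx0.
by rewrite -mulmxA => /(congr1 (mulmx (invmx S))); rewrite mulKmx // mulmx0.
Qed.

Section moment_identification.
Context {R : nzRingType} {m d : nat}.

Lemma coord_solutions_set1P (M : 'M[R]_(m, d)) (b : 'cV[R]_d) j :
  [set beta j 0 | beta in [set beta | M *m beta = M *m b]] = [set b j 0] <->
  null_proj M j = [set 0].
Proof.
split => [coordE | null0].
- apply/seteqP; split => [_ [w /= Mw <-] | _ ->]; last first.
    by exists 0; rewrite /= ?mulmx0 ?mxE.
  have : [set beta j 0 | beta in [set beta | M *m beta = M *m b]] ((b + w) j 0).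
    by exists (b + w) => //=; rewrite mulmxDr Mw addr0.
  rewrite coordE mxE => /= /eqP.
  by rewrite -subr_eq0 addrAC subrr add0r => /eqP.
- apply/seteqP; split => [_ [beta /= Mbeta <-] | _ ->]; last by exists b.
  have : null_proj M j ((beta - b) j 0).
    by exists (beta - b) => //=; rewrite mulmxBr Mbeta subrr.
  by rewrite null0 !mxE /= => /eqP; rewrite subr_eq0 => /eqP.
Qed.

Lemma ginv_coord (M : 'M[R]_(m, d)) (Mg : 'M[R]_(d, m)) (b : 'cV[R]_d) j :
  M *m Mg *m M = M -> null_proj M j = [set 0] -> (Mg *m (M *m b)) j 0 = b j 0.
Proof.
move=> MgK /(coord_solutions_set1P M b j) coordE.
have : [set beta j 0 | beta in [set beta | M *m beta = M *m b]]
    ((Mg *m (M *m b)) j 0).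
  by exists (Mg *m (M *m b)) => //=; rewrite !mulmxA MgK.
by rewrite coordE.
Qed.

End moment_identification.

Lemma measurable_tcol_coord {R : realType} {n} (k : 'I_n) :
  measurable_fun setT (fun x : n.-tuple R => tcol x k 0).
Proof.
rewrite (_ : (fun x => _) = fun x => tnth x k); first exact: measurable_tnth.
by apply/funext => x; rewrite mxE.
Qed.

Theorem proposition1
  (R : realType) (dT : measure_display) (T : measurableType dT)
  (P : probability T R)
  (d m q : nat)
  (dEX dEY : measure_display) (EX : measurableType dEX) (EY : measurableType dEY)
  (I : T -> m.-tuple R) (H : T -> q.-tuple R) (epsX : T -> EX) (epsY : T -> EY)
  (X : T -> 'cV[R]_d) (Y : T -> R)
  (B : 'M[R]_d) (A : 'M[R]_(d, m)) (betastar : 'cV[R]_d)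
  (h : (q.-tuple R * EX)%type -> d.-tuple R) (g : (q.-tuple R * EY)%type -> R) :
  measurable_fun [set: T] I -> measurable_fun [set: T] H ->
  measurable_fun [set: T] epsX -> measurable_fun [set: T] epsY ->
  measurable_fun [set: q.-tuple R * EX] h ->
  measurable_fun [set: q.-tuple R * EY] g ->
  (1%:M - B) \in unitmx ->
  (forall t, X t = B *m X t + A *m tcol (I t) + tcol (h (H t, epsX t))) ->
  (forall t, Y t = ((X t)^T *m betastar) 0 0 + g (H t, epsY t)) ->
  jointly_independent4 P I H epsX epsY ->
  (* all covariances involved exist: finite second moments *)
  (forall i : 'I_m, (fun t => tnth (I t) i) \in Lfun P 2%:E) ->
  (forall j : 'I_d, (fun t => X t j 0) \in Lfun P 2%:E) ->
  Y \in Lfun P 2%:E ->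
  (* Cov[I] invertible *)
  \matrix_(i < m, k < m) rcov P (fun t => tnth (I t) i) (fun t => tnth (I t) k)
    \in unitmx ->
  let C : 'M[R]_(m, d) := A^T *m (invmx (1%:M - B))^T in
  let CovIX : 'M[R]_(m, d) :=
    \matrix_(i < m, j < d) rcov P (fun t => tnth (I t) i) (fun t => X t j 0) in
  let CovIY : 'cV[R]_m :=
    \col_(i < m) rcov P (fun t => tnth (I t) i) Y in
  forall j : 'I_d,
    (identifiable_by_moment P (fun i t => tnth (I t) i) X Y betastar j
       <-> null_proj C j = [set 0])
    /\ (null_proj C j = [set 0] ->
        forall Mp : 'M[R]_(d, m), is_moore_penrose CovIX Mp ->
        betastar j 0 = (Mp *m CovIY) j 0).
Proof.
move=> mI mH mEX mEY mh mg unitB X_eq Y_eq indep I2 X2 Y2 unitS C CovIX CovIY j.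
pose Ii i t := tnth (I t) i; pose Iv t := tcol (I t).
pose hX t := tcol (h (H t, epsX t)); pose gY t := g (H t, epsY t).
have Iv_coords : coords Iv = Ii := coords_tcol I.
have hX_uncorrelated : covmx P Ii (coords hX) = 0.
  apply: (covmx_indep3 P I H epsX (fun i x => tnth x i)
    (fun k p => tcol (h p) k 0)) => //.
  - by move=> i; exact: measurable_tnth.
  - by move=> k; exact: measurableT_comp (measurable_tcol_coord k) mh.
  - exact: jointly_independent4_drop4 indep.
  - exact: (Lfun2_noise_X P Ii Iv X hX B A I2 X2 Iv_coords X_eq).
have gY_uncorrelated : covmx P Ii (fun _ : 'I_1 => gY) = 0.
  apply: (covmx_indep3 P I H epsY (fun i x => tnth x i) (fun=> g)) => //.
  - by move=> i; exact: measurable_tnth.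
  - exact: jointly_independent4_drop3 indep.
  - by move=> _; exact: (Lfun2_noise_Y P X Y gY betastar X2 Y2 Y_eq).
have CovIXE : CovIX = covmx P Ii Ii *m C :=
  covmx_IX P Ii Iv X hX B A I2 X2 Iv_coords X_eq hX_uncorrelated unitB.
have CovIYE : CovIY = CovIX *m betastar :=
  covmx_IY P Ii X Y gY betastar I2 X2 Y2 Y_eq gY_uncorrelated.
have nullE : null_proj CovIX j = null_proj C j.
  by rewrite CovIXE null_proj_mulmx_unit.
split.
  rewrite -nullE -(coord_solutions_set1P _ betastar) /identifiable_by_moment.
  suff -> : [set beta | forall i, covariance P (fun t => tnth (I t) i)
      (fun t => Y t - ((X t)^T *m beta) 0 0) = 0%E] =
      [set beta | CovIX *m beta = CovIX *m betastar] by [].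
  apply/funext => beta; apply/propext; rewrite -CovIYE.
  exact: (moment_condition_iff P Ii X Y I2 X2 Y2).
by rewrite -nullE CovIYE => null0 Mp [MpK _ _ _]; rewrite ginv_coord.
Qed.
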